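(* Let $A,B$ be finite-dimensional $K$-subspaces of $L$ with $K\subset A\cap B$. Suppose there exist $K$-subspaces $\overline{A},\overline{B}\subset L$ such that $$A=K\oplus\overline{A},\quad B=K\oplus\overline{B},\quad K\cap\big(\overline{A}+\overline{B}+\langle\overline{A}\,\overline{B}\rangle\big)=\{0\}.$$ Then $\dim_K\langle AB\rangle\geq\dim_KA+\dim_KB-1$.
   Context: $K$ is a commutative field and $L$ is a (possibly noncommutative) division ring containing $K$ in its center. For $S\subset L$, $\langle S\rangle$ denotes the $K$-subspace of $L$ spanned by $S$. For subsets $S_1,S_2$ of $L$, $S_1S_2=\{s_1s_2\mid s_1\in S_1,s_2\in S_2\}$ (product set). *)

From HB Require Import structures.
From mathcomp Require Import all_boot all_order all_algebra.
Set Implicit Arguments. Unset Strict Implicit. Unset Printing Implicit Defensive.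
Import GRing.Theory.
Local Open Scope ring_scope.

Section Defs.
Variables (K : fieldType) (L : unitAlgType K).

Definition kspan (S : L -> Prop) : L -> Prop :=
  fun v => exists (s : seq L) (c : seq K),
    (forall i, (i < size s)%N -> S (nth 0 s i)) /\ size c = size s /\
    v = \sum_(i < size s) c`_i *: s`_i.

Definition is_subspace (S : L -> Prop) : Prop :=
  S 0 /\ forall (a : K) u v, S u -> S v -> S (a *: u + v).

Definition lin_indep (s : seq L) : Prop :=
  forall c : seq K, size c = size s ->
    \sum_(i < size s) c`_i *: s`_i = 0 -> forall i, (i < size s)%N -> c`_i = 0.

Definition has_dim (S : L -> Prop) (n : nat) : Prop :=
  exists s : seq L, size s = n /\ lin_indep s /\
    forall x, S x <-> kspan (fun y => y \in s) x.

Definition prodset (S1 S2 : L -> Prop) : L -> Prop :=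
  fun x => exists s1 s2, S1 s1 /\ S2 s2 /\ x = s1 * s2.

Definition sum3 (S1 S2 S3 : L -> Prop) : L -> Prop :=
  fun x => exists x1 x2 x3, S1 x1 /\ S2 x2 /\ S3 x3 /\ x = x1 + x2 + x3.

Definition dsum_K (A Abar : L -> Prop) : Prop :=
  (forall x, A x <-> exists (k : K) y, Abar y /\ x = k%:A + y) /\
  (forall k : K, Abar (k%:A) -> k%:A = 0 :> L).

End Defs.

(* Write A = K ⊕ Abar, B = K ⊕ Bbar and W(Abar, Bbar) = Abar + Bbar + <Abar Bbar>;
   call the pair (Abar, Bbar) admissible when K ∩ W = 0.  We prove
   dim <A B> >= dim A + dim B - 1 by induction:
   - if Abar ∩ Bbar = 0, admissibility forces A ∩ Bbar = 0, and A + Bbar lies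
     in <A B> while dim Bbar >= dim B - 1;
   - otherwise, for x ≠ 0 in Abar ∩ Bbar (a unit of L), the right transform
     (A + A x, {y in B | x y in B}) and the left transform
     ({y in A | y x in A}, B + x B) come again from admissible pairs and have
     product spans inside <A B>; by Grassmann one of them increases dim A + dim B,
     or keeps it while decreasing dim B, which bounds the induction. *)

From Pilot Require Import Defs.
From HB Require Import structures.
From mathcomp Require Import all_boot all_order all_algebra zify.
From Stdlib Require Import Classical ClassicalEpsilon.
Import GRing.Theory.
Local Open Scope ring_scope.
Set Implicit Arguments. Unset Strict Implicit.

(* A homogeneous system with more unknowns than equations has a nontrivial
   solution; this is the matrix core of the Steinitz exchange lemma below. *)
Lemma nonzero_left_kernel (F : fieldType) (n m : nat) (M : 'M[F]_(n, m)) :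
  (m < n)%N -> exists2 r : 'rV_n, r != 0 & r *m M = 0.
Proof.
move=> lt_mn; have : kermx M != 0.
  rewrite kermx_eq0 /row_free; apply: contraTN lt_mn => /eqP <-.
  by rewrite -leqNgt rank_leq_col.
by case/rowV0Pn => r /sub_kermxP rM0 r0; exists r.
Qed.

Section FiniteDimension.
Variables (K : fieldType) (L : unitAlgType K).
Implicit Types (X Y : L -> Prop) (s t : seq L).

(* Linear combinations of a sequence, with coefficients indexed by positions;
   this is a more convenient presentation of [kspan] and [has_dim] of Defs. *)
Definition comb s (c : nat -> K) : L := \sum_(0 <= i < size s) c i *: s`_i.
Definition spanned s (v : L) : Prop := exists c, v = comb s c.
Definition indep s : Prop :=
  forall c, comb s c = 0 -> forall i, (i < size s)%N -> c i = 0.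
Definition dim_of X n : Prop :=
  exists s, size s = n /\ indep s /\ forall x, X x <-> spanned s x.
Definition seq_in X s : Prop := forall i, (i < size s)%N -> X s`_i.
Definition vsum X Y : L -> Prop := fun v => exists x y, X x /\ Y y /\ v = x + y.

Lemma subspace0 X : is_subspace X -> X 0. Proof. by case. Qed.

Lemma subspaceD X u v : is_subspace X -> X u -> X v -> X (u + v).
Proof. by case=> _ hX Xu Xv; move: (hX 1 u v Xu Xv); rewrite scale1r. Qed.

Lemma subspaceZ X a u : is_subspace X -> X u -> X (a *: u).
Proof. by case=> X0 hX Xu; move: (hX a u 0 Xu X0); rewrite addr0. Qed.

Lemma subspaceB X u v : is_subspace X -> X u -> X v -> X (u - v).
Proof. by move=> hX Xu Xv; rewrite -scaleN1r; apply: subspaceD => //; apply: subspaceZ. Qed.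

Lemma subspace_sum X (I : Type) (r : seq I) (P : pred I) (F : I -> L) :
  is_subspace X -> (forall i, P i -> X (F i)) -> X (\sum_(i <- r | P i) F i).
Proof.
move=> hX hF; elim/big_rec: _ => [|i x Pi Xx]; first exact: subspace0.
by apply: subspaceD => //; apply: hF.
Qed.

Lemma subspace_ext X Y : (forall v, X v <-> Y v) -> is_subspace Y -> is_subspace X.
Proof.
move=> eXY [Y0 hY]; split; first exact/eXY.
by move=> a u v /eXY Yu /eXY Yv; apply/eXY/hY.
Qed.

Lemma vsum_subspace X Y : is_subspace X -> is_subspace Y -> is_subspace (vsum X Y).
Proof.
move=> hX hY; split.
  by exists 0, 0; rewrite addr0; split; [exact: subspace0 | split; [exact: subspace0 |]].
move=> a _ _ [x1 [y1 [X1 [Y1 ->]]]] [x2 [y2 [X2 [Y2 ->]]]].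
exists (a *: x1 + x2), (a *: y1 + y2); rewrite scalerDr addrACA.
by split; [case: hX => _; apply | split; [case: hY => _; apply |]].
Qed.

Lemma comb_eq s c d : (forall i, (i < size s)%N -> c i = d i) -> comb s c = comb s d.
Proof. by move=> cd; apply: eq_big_nat => i /andP[_ /cd ->]. Qed.

Lemma comb_cat s1 s2 c :
  comb (s1 ++ s2) c = comb s1 c + comb s2 (fun i => c (size s1 + i)%N).
Proof.
rewrite /comb size_cat (@big_cat_nat _ _ _ (size s1)) ?leq_addr //=.
congr (_ + _); first by apply: eq_big_nat => i /andP[_ lt_i]; rewrite nth_cat lt_i.
rewrite -{1}(add0n (size s1)) big_addn addKn.
by apply: eq_big_nat => i _; rewrite nth_cat ltnNge leq_addl /= addnK addnC.
Qed.

Lemma combD s c d : comb s (fun i => c i + d i) = comb s c + comb s d.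
Proof. by rewrite /comb -big_split; apply: eq_bigr => i _; rewrite scalerDl. Qed.

Lemma combZ s a c : comb s (fun i => a * c i) = a *: comb s c.
Proof. by rewrite /comb scaler_sumr; apply: eq_bigr => i _; rewrite scalerA. Qed.

Lemma comb0 s : comb s (fun _ => 0) = 0.
Proof. by rewrite /comb big1 // => i _; rewrite scale0r. Qed.

Lemma comb1 y c : comb [:: y] c = c 0%N *: y.
Proof. by rewrite /comb big_nat1. Qed.

Lemma comb_map f s c : comb (map f s) c = \sum_(0 <= i < size s) c i *: f s`_i.
Proof. by rewrite /comb size_map; apply: eq_big_nat => i /andP[_ ?]; rewrite (nth_map 0). Qed.

Definition comb_catc s1 (c1 c2 : nat -> K) (i : nat) : K :=
  if (i < size s1)%N then c1 i else c2 (i - size s1)%N.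

Lemma comb_catcE s1 s2 c1 c2 :
  comb (s1 ++ s2) (comb_catc s1 c1 c2) = comb s1 c1 + comb s2 c2.
Proof.
rewrite comb_cat /comb_catc; congr (_ + _); apply: comb_eq => i // lt_i.
  by rewrite lt_i.
by rewrite ltnNge leq_addr addKn.
Qed.

Lemma spanned_subspace s : is_subspace (spanned s).
Proof.
split; first by exists (fun _ => 0); rewrite comb0.
by move=> a _ _ [c ->] [d ->]; exists (fun i => a * c i + d i); rewrite combD combZ.
Qed.

Lemma spanned_nth s i : (i < size s)%N -> spanned s s`_i.
Proof.
move=> lt_i; exists (fun j => if j == i then 1 else 0).
rewrite /comb (bigD1_seq i) ?mem_index_iota ?iota_uniq //= eqxx scale1r big1 ?addr0 //.
by move=> j /negbTE ->; rewrite scale0r.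
Qed.

Lemma spanned_mem s y : y \in s -> spanned s y.
Proof. by move=> sy; rewrite -(nth_index 0 sy); apply: spanned_nth; rewrite index_mem. Qed.

Lemma spanned_min s X : is_subspace X -> seq_in X s -> forall v, spanned s v -> X v.
Proof.
move=> hX Xs v [c ->]; rewrite /comb big_seq; apply: subspace_sum => // i.
by rewrite mem_index_iota => /andP[_ lt_i]; apply: subspaceZ => //; apply: Xs.
Qed.

Lemma spanned_catD s1 s2 u w : spanned s1 u -> spanned s2 w -> spanned (s1 ++ s2) (u + w).
Proof. by move=> [c1 ->] [c2 ->]; exists (comb_catc s1 c1 c2); rewrite comb_catcE. Qed.

Lemma seq_in_cat X s1 s2 : seq_in X s1 -> seq_in X s2 -> seq_in X (s1 ++ s2).
Proof.
move=> X1 X2 i; rewrite size_cat nth_cat; case: ifP => lt_i1 lt_i; first exact: X1.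
by apply: X2; rewrite -(ltn_add2l (size s1)) subnKC // leqNgt lt_i1.
Qed.

Lemma seq_in1 X y : X y -> seq_in X [:: y].
Proof. by move=> Xy [|i]. Qed.

Lemma kspan_in (P : L -> Prop) y : P y -> kspan P y.
Proof. by move=> Py; exists [:: y], [:: 1]; split; [case | rewrite /= big_ord1 scale1r]. Qed.

Lemma kspan_mono (P Q : L -> Prop) v : (forall y, P y -> Q y) -> kspan P v -> kspan Q v.
Proof. by move=> PQ [s [c [Ps hc]]]; exists s, c; split => // i /Ps /PQ. Qed.

Lemma kspanE (P : L -> Prop) v : kspan P v <-> exists s, seq_in P s /\ spanned s v.
Proof.
split=> [[s [c [Ps [_ ->]]]] | [s [Ps [c ->]]]].
  by exists s; split => //; exists (nth 0 c); rewrite /comb big_mkord.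
exists s, (mkseq c (size s)); rewrite size_mkseq /comb big_mkord; do !split => //.
by apply: eq_bigr => i _; rewrite nth_mkseq.
Qed.

Lemma kspan_subspace (P : L -> Prop) : is_subspace (kspan P).
Proof.
split; first by apply/kspanE; exists [::]; split => //; exists (fun _ => 0); rewrite comb0.
move=> a u v /kspanE [s1 [P1 hu]] /kspanE [s2 [P2 hv]]; apply/kspanE.
exists (s1 ++ s2); split; first exact: seq_in_cat.
by apply: spanned_catD => //; apply: subspaceZ (spanned_subspace s1) hu.
Qed.

Lemma kspan_min (P X : L -> Prop) v :
  is_subspace X -> (forall y, P y -> X y) -> kspan P v -> X v.
Proof. by move=> hX PX /kspanE [s [Ps]]; apply: spanned_min => // i /Ps /PX. Qed.

Lemma spanned_kspan s v : spanned s v <-> kspan (fun y => y \in s) v.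
Proof.
split=> [sv | ]; first by apply/kspanE; exists s; split => // i; apply: mem_nth.
by apply: kspan_min (spanned_subspace s) _ => y; apply: spanned_mem.
Qed.

Lemma indepE s : lin_indep s <-> indep s.
Proof.
split=> [hs c c0 i lt_i | hs c _ c0 i lt_i]; last by apply: hs i lt_i; rewrite /comb big_mkord.
have := hs (mkseq c (size s)); rewrite size_mkseq => /(_ erefl _ i lt_i).
rewrite nth_mkseq //; apply; rewrite -[RHS]c0 /comb big_mkord.
by apply: eq_bigr => j _; rewrite nth_mkseq.
Qed.

Lemma dim_ofE X n : has_dim X n <-> dim_of X n.
Proof.
split=> [[s [sz [fs eX]]] | [s [sz [fs eX]]]]; exists s; split => //;
  (split; [exact/indepE | by move=> x; rewrite eX spanned_kspan]).
Qed.

Lemma indep_nil : indep [::].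
Proof. by move=> c _ i. Qed.

Lemma indep1 y : y != 0 -> indep [:: y].
Proof.
move=> y0 c; rewrite comb1 => /eqP; rewrite scaler_eq0 (negbTE y0) orbF => /eqP c0.
by case.
Qed.

Lemma indep_cat s1 s2 : indep s1 -> indep s2 ->
  (forall v, spanned s1 v -> spanned s2 v -> v = 0) -> indep (s1 ++ s2).
Proof.
move=> f1 f2 disj c; rewrite comb_cat => c0.
pose c2 := fun i => c (size s1 + i)%N.
have opp : comb s1 c = - comb s2 c2 by apply/eqP; rewrite -addr_eq0 c0.
have z1 : comb s1 c = 0.
  apply: disj; first by exists c.
  by rewrite opp -scaleN1r; apply: subspaceZ (spanned_subspace s2) _; exists c2.
have z2 : comb s2 c2 = 0 by move: c0; rewrite z1 add0r.
move=> i; rewrite size_cat => lt_i; case: (ltnP i (size s1)) => [|le_i]; first exact: f1.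
have := f2 _ z2 (i - size s1)%N; rewrite /c2 subnKC //; apply.
by rewrite -(ltn_add2l (size s1)) subnKC.
Qed.

Lemma indep_catr s1 s2 : indep (s1 ++ s2) -> indep s2.
Proof.
move=> f c c0 i lt_i; have := f (comb_catc s1 (fun _ => 0) c).
rewrite comb_catcE comb0 c0 addr0 size_cat => /(_ erefl (size s1 + i)%N).
by rewrite ltn_add2l => /(_ lt_i); rewrite /comb_catc ltnNge leq_addr addKn.
Qed.

Lemma indep_cat_disjoint s1 s2 : indep (s1 ++ s2) ->
  forall v, spanned s1 v -> spanned s2 v -> v = 0.
Proof.
move=> f v [c1 e1] [c2 e2].
have opp : comb s2 (fun j => - c2 j) = - v.
  by rewrite e2 -scaleN1r -combZ; apply: comb_eq => j _; rewrite mulN1r.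
have := f (comb_catc s1 c1 (fun j => - c2 j)).
rewrite comb_catcE opp -e1 subrr => /(_ erefl) c0.
rewrite e1 -(comb0 s1); apply: comb_eq => j lt_j.
by have := c0 j; rewrite /comb_catc lt_j size_cat ltn_addr //; apply.
Qed.

Lemma indep_rcons s y : indep s -> ~ spanned s y -> indep (s ++ [:: y]).
Proof.
move=> fs nsy; apply: indep_cat => //.
  apply: indep1; apply: contra_notN nsy => /eqP ->; exact: subspace0 (spanned_subspace s).
move=> v sv [c]; rewrite comb1 => ev.
case: (eqVneq (c 0%N) 0) => [c0 | c0]; first by rewrite ev c0 scale0r.
suff : spanned s y by [].
have -> : y = (c 0%N)^-1 *: v by rewrite ev scalerA mulVf // scale1r.
exact: subspaceZ (spanned_subspace s) sv.
Qed.

Lemma steinitz s t : indep t -> seq_in (spanned s) t -> (size t <= size s)%N.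
Proof.
move=> ft ts; rewrite leqNgt; apply/negP => lt_st.
have coef (j : 'I_(size t)) : {c : nat -> K | t`_j = comb s c}.
  exact/constructive_indefinite_description/ts.
pose M : 'M[K]_(size t, size s) := \matrix_(j, i) sval (coef j) i.
have [r r0 rM0] := nonzero_left_kernel M lt_st.
pose c j := if (insub j : option 'I_(size t)) is Some j' then r 0 j' else 0.
suff /ft c0 : comb t c = 0.
  by apply/negP: r0; apply/negPn/eqP/rowP => j; rewrite mxE -(c0 j) // /c valK.
have -> : comb t c = \sum_(i < size s) (r *m M) 0 i *: s`_i.
  transitivity (\sum_(i < size s) \sum_(j < size t) (r 0 j * M j i) *: s`_i); last first.
    by apply: eq_bigr => i _; rewrite mxE scaler_suml.
  rewrite exchange_big /= /comb big_mkord; apply: eq_bigr => j _.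
  rewrite /c valK (svalP (coef j)) /comb big_mkord scaler_sumr.
  by apply: eq_bigr => i _; rewrite scalerA /M mxE.
by rewrite rM0 big1 // => i _; rewrite mxE scale0r.
Qed.

Lemma extend_basis s X : is_subspace X -> (forall y, X y -> spanned s y) ->
  forall t, indep t -> seq_in X t ->
  exists t', [/\ indep (t ++ t'), seq_in X t' & forall y, X y <-> spanned (t ++ t') y].
Proof.
move=> hX Xs t ft Xt; move: (ltnSn (size s - size t)).
move: {2}(size s - size t).+1 => k; elim: k t ft Xt => [|k IH] t ft Xt lt_k //.
case: (classic (exists y, X y /\ ~ spanned t y)) => [[y [Xy nty]] | none]; last first.
  exists [::]; rewrite cats0; split=> //.
  move=> y; split; last exact: spanned_min.
  by move=> Xy; apply: NNPP => nty; apply: none; exists y.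
have fty := indep_rcons ft nty.
have Xty : seq_in X (t ++ [:: y]) := seq_in_cat Xt (seq_in1 Xy).
have := steinitz fty (fun j lt_j => Xs _ (Xty j lt_j)); rewrite size_cat addn1 => lt_ts.
have lt_k' : (size s - size (t ++ [:: y]) < k)%N by rewrite size_cat /=; lia.
have [t' [f' Xt' e']] := IH _ fty Xty lt_k'.
exists (y :: t'); rewrite -cat1s catA; split => //.
exact: seq_in_cat (seq_in1 Xy) Xt'.
Qed.

Lemma dim_ext X Y n : (forall v, X v <-> Y v) -> dim_of Y n -> dim_of X n.
Proof. by move=> eXY [s [? [? eY]]]; exists s; do 2 split => //; move=> x; rewrite eXY. Qed.

Lemma dim_subspace X n : dim_of X n -> is_subspace X.
Proof. by move=> [s [_ [_ eX]]]; apply: subspace_ext eX (spanned_subspace s). Qed.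

Lemma dim_exists s X : is_subspace X -> (forall y, X y -> spanned s y) ->
  exists2 n, dim_of X n & (n <= size s)%N.
Proof.
move=> hX Xs; have [t [ft Xt eX]] := extend_basis hX Xs indep_nil (fun i => False_ind _ \o notF).
by exists (size t); [exists t | apply: steinitz => // j /Xt /Xs].
Qed.

Lemma dim_le X Y n m : dim_of X n -> dim_of Y m -> (forall v, X v -> Y v) -> (n <= m)%N.
Proof.
move=> [s [<- [fs eX]]] [t [<- [_ eY]]] XY; apply: steinitz fs _ => j lt_j.
by apply/eY/XY/eX/spanned_nth.
Qed.

Lemma dim_unique X n m : dim_of X n -> dim_of X m -> n = m.
Proof. by move=> dn dm; apply/eqP; rewrite eqn_leq !(dim_le dn dm, dim_le dm dn). Qed.

Lemma dim_sub_exists X Y m : is_subspace X -> dim_of Y m -> (forall y, X y -> Y y) ->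
  exists2 n, dim_of X n & (n <= m)%N.
Proof. by move=> hX [s [<- [_ eY]]] XY; apply: dim_exists hX _ => y /XY /eY. Qed.

Lemma dim_eq_sub X Y n : dim_of X n -> dim_of Y n -> (forall v, X v -> Y v) ->
  forall v, Y v -> X v.
Proof.
move=> dX dY XY; have [s [sz [fs eX]]] := dX; have [u [_ [_ eY]]] := dY.
have Xs : seq_in Y s by move=> i /spanned_nth /eX /XY.
have [t [fst Yt est]] := extend_basis (dim_subspace dY) (fun y => proj1 (eY y)) fs Xs.
have : size (s ++ t) = n by apply: dim_unique dY; exists (s ++ t).
rewrite size_cat sz -{2}(addn0 n) => /addnI /eqP; rewrite size_eq0 => /eqP t0.
by move=> v /est; rewrite t0 cats0 => /eX.
Qed.

Lemma grassmann X Y nX nY nI nS : dim_of X nX -> dim_of Y nY ->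
  dim_of (fun v => X v /\ Y v) nI -> dim_of (vsum X Y) nS -> (nX + nY <= nS + nI)%N.
Proof.
move=> [s [<- [fs eX]]] dY [r [<- [fr eI]]] [u [<- [_ eS]]].
have hY := dim_subspace dY; have [w [_ [_ eY]]] := dY.
have Yr : seq_in Y r by move=> i /spanned_nth /eI [].
have [t [frt Yt ert]] := extend_basis hY (fun y => proj1 (eY y)) fr Yr.
have <- : size (r ++ t) = nY by apply: dim_unique dY; exists (r ++ t).
have fst : indep (s ++ t).
  apply: indep_cat => //; first exact: indep_catr frt.
  move=> v /eX Xv tv; have Yv : Y v := spanned_min hY Yt tv.
  exact: (indep_cat_disjoint frt) (proj1 (eI v) (conj Xv Yv)) tv.
have := steinitz fst; rewrite !size_cat addnCA [(size u + _)%N]addnC leq_add2l; apply.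
apply: seq_in_cat => i lt_i; apply/eS.
  by exists s`_i, 0; rewrite addr0; do !split; [exact/eX/spanned_nth | exact: subspace0].
exists 0, t`_i; rewrite add0r; do !split; last exact: Yt.
exact/eX/(subspace0 (spanned_subspace s)).
Qed.

Definition rmul X (x : L) : L -> Prop := fun y => exists z, X z /\ y = z * x.
Definition lmul (x : L) X : L -> Prop := fun y => exists z, X z /\ y = x * z.
Definition rpre X Y (x : L) : L -> Prop := fun y => X y /\ Y (y * x).
Definition lpre X Y (x : L) : L -> Prop := fun y => X y /\ Y (x * y).

Lemma rmul_subspace X x : is_subspace X -> is_subspace (rmul X x).
Proof.
move=> hX; split; first by exists 0; rewrite mul0r; split => //; apply: subspace0.
move=> a _ _ [z1 [X1 ->]] [z2 [X2 ->]]; exists (a *: z1 + z2).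
by rewrite mulrDl scalerAl; split => //; case: hX => _; apply.
Qed.

Lemma lmul_subspace X x : is_subspace X -> is_subspace (lmul x X).
Proof.
move=> hX; split; first by exists 0; rewrite mulr0; split => //; apply: subspace0.
move=> a _ _ [z1 [X1 ->]] [z2 [X2 ->]]; exists (a *: z1 + z2).
by rewrite mulrDr scalerAr; split => //; case: hX => _; apply.
Qed.

Lemma rpre_subspace X Y x : is_subspace X -> is_subspace Y -> is_subspace (rpre X Y x).
Proof.
move=> [X0 hX] [Y0 hY]; split; first by split; rewrite ?mul0r.
by move=> a u v [Xu Yu] [Xv Yv]; split; [apply: hX | rewrite mulrDl -scalerAl; apply: hY].
Qed.

Lemma lpre_subspace X Y x : is_subspace X -> is_subspace Y -> is_subspace (lpre X Y x).
Proof.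
move=> [X0 hX] [Y0 hY]; split; first by split; rewrite ?mulr0.
by move=> a u v [Xu Yu] [Xv Yv]; split; [apply: hX | rewrite mulrDr -scalerAr; apply: hY].
Qed.

Lemma dim_rmul X n x : x \is a GRing.unit -> dim_of X n -> dim_of (rmul X x) n.
Proof.
move=> ux [s [<- [fs eX]]]; exists (map (fun z => z * x) s); rewrite size_map.
have combM c : comb (map (fun z => z * x) s) c = comb s c * x.
  by rewrite comb_map /comb mulr_suml; apply: eq_bigr => i _; rewrite scalerAl.
split=> //; split=> [c | y].
  by rewrite combM size_map => c0; apply: fs; rewrite -(mulrK ux (comb s c)) c0 mul0r.
split=> [[z [/eX [c ->] ->]] | [c ->]]; first by exists c; rewrite combM.
by exists (comb s c); rewrite combM; split => //; apply/eX; exists c.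
Qed.

Lemma dim_lmul X n x : x \is a GRing.unit -> dim_of X n -> dim_of (lmul x X) n.
Proof.
move=> ux [s [<- [fs eX]]]; exists (map (fun z => x * z) s); rewrite size_map.
have combM c : comb (map (fun z => x * z) s) c = x * comb s c.
  by rewrite comb_map /comb mulr_sumr; apply: eq_bigr => i _; rewrite scalerAr.
split=> //; split=> [c | y].
  by rewrite combM size_map => c0; apply: fs; rewrite -(mulKr ux (comb s c)) c0 mulr0.
split=> [[z [/eX [c ->] ->]] | [c ->]]; first by exists c; rewrite combM.
by exists (comb s c); rewrite combM; split => //; apply/eX; exists c.
Qed.

(* Grassmann for a subspace and its translate: since [X ∩ X x = (rpre X X x) x],
   dim X + dim X <= dim (X + X x) + dim (rpre X X x). *)
Lemma dim_rtranslate X n i m x : x \is a GRing.unit -> dim_of X n ->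
  dim_of (rpre X X x) i -> dim_of (vsum X (rmul X x)) m -> (n + n <= m + i)%N.
Proof.
move=> ux dX dI; apply: grassmann dX (dim_rmul ux dX) (dim_ext _ (dim_rmul ux dI)).
move=> y; split=> [[Xy [z [Xz yE]]] | [z [[Xz Xzx] ->]]]; last by split => //; exists z.
by exists z; do !split => //; rewrite -yE.
Qed.

Lemma dim_ltranslate X n i m x : x \is a GRing.unit -> dim_of X n ->
  dim_of (lpre X X x) i -> dim_of (vsum X (lmul x X)) m -> (n + n <= m + i)%N.
Proof.
move=> ux dX dI; apply: grassmann dX (dim_lmul ux dX) (dim_ext _ (dim_lmul ux dI)).
move=> y; split=> [[Xy [z [Xz yE]]] | [z [[Xz Xxz] ->]]]; last by split => //; exists z.
by exists z; do !split => //; rewrite -yE.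
Qed.

(* The span of the product set of two finite-dimensional subspaces is spanned by
   the pairwise products of their bases, hence has a dimension. *)
Lemma dim_prodset X Y n m : dim_of X n -> dim_of Y m ->
  exists k, dim_of (kspan (prodset X Y)) k.
Proof.
move=> [s [_ [_ eX]]] [t [_ [_ eY]]].
suff /(dim_exists (kspan_subspace _)) [k dk _] :
    forall v, kspan (prodset X Y) v -> spanned [seq x * y | x <- s, y <- t] v.
  by exists k.
have hS := spanned_subspace [seq x * y | x <- s, y <- t].
move=> v; apply: (kspan_min hS) => _ [_ [_ [/eX [c ->] [/eY [d ->] ->]]]].
rewrite /comb mulr_suml big_seq; apply: subspace_sum (hS) _ => i.
rewrite mem_index_iota mulr_sumr big_seq => /andP[_ lt_i].
apply: subspace_sum (hS) _ => j; rewrite mem_index_iota => /andP[_ lt_j].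
rewrite -scalerAl -scalerAr; do 2 apply: subspaceZ (hS) _.
by apply: spanned_mem; apply: allpairs_f; apply: mem_nth.
Qed.
End FiniteDimension.

Section AdmissiblePairs.
Variables (K : fieldType) (L : unitAlgType K).
Implicit Types (U V X Y : L -> Prop).

Definition addK U : L -> Prop := fun y => exists (k : K) u, U u /\ y = k%:A + u.

Definition wspan U V : L -> Prop := sum3 U V (kspan (prodset U V)).

Record admissible U V : Prop := Admissible {
  adm_U : is_subspace U;
  adm_V : is_subspace V;
  adm_K : forall k : K, wspan U V k%:A -> k%:A = 0 :> L }.

Definition prodspan U V : L -> Prop := kspan (prodset (addK U) (addK V)).

Lemma addK_subspace U : is_subspace U -> is_subspace (addK U).
Proof.
move=> hU; split; first by exists 0, 0; rewrite scale0r addr0; split => //; apply: subspace0.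
move=> a _ _ [k1 [u1 [U1 ->]]] [k2 [u2 [U2 ->]]].
exists (a * k1 + k2), (a *: u1 + u2); rewrite scalerDr scalerDl scalerA addrACA.
by split => //; case: hU => _; apply.
Qed.

Lemma addK_U U u : U u -> addK U u.
Proof. by move=> Uu; exists 0, u; rewrite scale0r add0r. Qed.

Lemma addK_1 U : is_subspace U -> addK U 1.
Proof. by move=> hU; exists 1, 0; rewrite scale1r addr0; split => //; apply: subspace0. Qed.

Lemma addK_vsum X Y y : addK (vsum X Y) y <-> vsum (addK X) Y y.
Proof.
split=> [[k [_ [[p [q [Xp [Yq ->]]]] ->]]] | [_ [q [[k [p [Xp ->]]] [Yq ->]]]]].
  by exists (k%:A + p), q; rewrite addrA; do !split => //; exists k, p.
by exists k, (p + q); rewrite addrA; split => //; exists p, q.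
Qed.

Lemma addK_rpre U x y : is_subspace U -> U x ->
  addK (rpre U (addK U) x) y <-> rpre (addK U) (addK U) x y.
Proof.
move=> hU Ux; have hA := addK_subspace hU; have Ax : addK U x := addK_U Ux.
split=> [[k [u [[Uu Aux] ->]]] | [[k [u [Uu ->]]] Ayx]].
  split; first by exists k, u.
  by rewrite mulrDl mulr_algl; apply: subspaceD => //; apply: subspaceZ.
exists k, u; split => //; split => //.
have := subspaceB hA Ayx (subspaceZ k hA Ax).
by rewrite mulrDl mulr_algl addrC addKr.
Qed.

Lemma addK_lpre U x y : is_subspace U -> U x ->
  addK (lpre U (addK U) x) y <-> lpre (addK U) (addK U) x y.
Proof.
move=> hU Ux; have hA := addK_subspace hU; have Ax : addK U x := addK_U Ux.
split=> [[k [u [[Uu Axu] ->]]] | [[k [u [Uu ->]]] Axy]].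
  split; first by exists k, u.
  by rewrite mulrDr mulr_algr; apply: subspaceD => //; apply: subspaceZ.
exists k, u; split => //; split => //.
have := subspaceB hA Axy (subspaceZ k hA Ax).
by rewrite mulrDr mulr_algr addrC addKr.
Qed.

Lemma wspan_subspace U V : is_subspace U -> is_subspace V -> is_subspace (wspan U V).
Proof.
move=> hU hV; apply: (@subspace_ext _ _ _ (vsum (vsum U V) (kspan (prodset U V)))).
  move=> y; split=> [[u [v [z [Uu [Vv [Pz ->]]]]]] | [_ [z [[u [v [Uu [Vv ->]]]] [Pz ->]]]]].
    by exists (u + v), z; do !split => //; exists u, v.
  by exists u, v, z.
by apply: vsum_subspace (kspan_subspace _); apply: vsum_subspace.
Qed.

Lemma wspan_U U V u : is_subspace V -> U u -> wspan U V u.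
Proof.
move=> hV Uu; exists u, 0, 0; rewrite !addr0; do !split => //; first exact: subspace0.
exact: subspace0 (kspan_subspace _).
Qed.

Lemma wspan_V U V v : is_subspace U -> V v -> wspan U V v.
Proof.
move=> hU Vv; exists 0, v, 0; rewrite addr0 add0r; do !split => //; first exact: subspace0.
exact: subspace0 (kspan_subspace _).
Qed.

Lemma wspan_mul U V u v : is_subspace U -> is_subspace V -> U u -> V v -> wspan U V (u * v).
Proof.
move=> hU hV Uu Vv; exists 0, 0, (u * v); rewrite !add0r.
by do !split; [exact: subspace0 | exact: subspace0 | apply: kspan_in; exists u, v].
Qed.

Lemma admissible_sub U V U' V' : admissible U V -> is_subspace U' -> is_subspace V' ->
  (forall y, U' y -> wspan U V y) -> (forall y, V' y -> wspan U V y) ->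
  (forall y, prodset U' V' y -> wspan U V y) -> admissible U' V'.
Proof.
move=> [hU hV hK] hU' hV' sU sV sP; split=> // k [y1 [y2 [y3 [U1 [V2 [P3 kE]]]]]].
have hW := wspan_subspace hU hV.
apply: hK; rewrite kE; apply: subspaceD => //; first by apply: subspaceD; [| exact: sU | exact: sV].
exact: kspan_min hW sP P3.
Qed.

Lemma admissible_addK U V X w : admissible U V -> (forall y, X y -> wspan U V y) ->
  wspan U V w -> addK X w -> X w.
Proof.
move=> [hU hV hK] XW Ww [k [y [Xy wE]]].
have : k%:A = 0 :> L.
  by apply: hK; have := subspaceB (wspan_subspace hU hV) Ww (XW y Xy); rewrite wE addrK.
by move=> k0; rewrite wE k0 add0r.
Qed.

Lemma admissible_one U V : admissible U V -> ~ wspan U V 1.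
Proof.
move=> [_ _ hK] W1; have := hK 1; rewrite scale1r => /(_ W1) /eqP.
by rewrite oner_eq0.
Qed.

(* Both factors lie in the product span, since each contains 1. *)
Lemma addK_prodspanl U V y : is_subspace V -> addK U y -> prodspan U V y.
Proof.
by move=> hV Ay; apply: kspan_in; exists y, 1; rewrite mulr1; do !split => //; exact: addK_1.
Qed.

Lemma addK_prodspanr U V y : is_subspace U -> addK V y -> prodspan U V y.
Proof.
by move=> hU By; apply: kspan_in; exists 1, y; rewrite mul1r; split => //; exact: addK_1.
Qed.

Lemma rtransform U V x : admissible U V -> U x -> V x ->
  [/\ admissible (vsum U (rmul (addK U) x)) (lpre V (addK V) x),
      forall y, vsum (addK U) (rmul (addK U) x) y <-> addK (vsum U (rmul (addK U) x)) y,
      forall y, lpre (addK V) (addK V) x y <-> addK (lpre V (addK V) x) y &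
      forall y, prodspan (vsum U (rmul (addK U) x)) (lpre V (addK V) x) y -> prodspan U V y].
Proof.
move=> adm Ux Vx; have [hU hV _] := adm.
have hA := addK_subspace hU; have hB := addK_subspace hV; have hW := wspan_subspace hU hV.
have xV v : V v -> addK V (x * v) -> V (x * v).
  by move=> Vv; apply: admissible_addK adm (fun y Vy => wspan_V hU Vy) (wspan_mul hU hV Ux Vv).
split=> [|y|y|]; [| exact: iff_sym (addK_vsum _ _ y) | exact: iff_sym (addK_lpre y hV Vx) |];
  last first.
- move=> y; apply: kspan_min (kspan_subspace _) _ => w [y1 [y2 [/addK_vsum A'y1 [B'y2 ->]]]].
  move: A'y1 B'y2 => [p [q [Ap [[z [Az ->]] ->]]]] /(addK_lpre y2 hV Vx) [By2 Bxy2].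
  rewrite mulrDl -mulrA; apply: subspaceD (kspan_subspace _) _ _; apply: kspan_in.
    by exists p, y2.
  by exists z, (x * y2).
apply: admissible_sub adm (vsum_subspace hU (rmul_subspace x hA)) (lpre_subspace x hV hB) _ _ _.
- move=> _ [p [_ [Up [[z [[k [u [Uu ->]]] ->]] ->]]]].
  rewrite mulrDl mulr_algl; apply: subspaceD (hW) (wspan_U hV Up) _.
  exact: subspaceD (hW) (subspaceZ _ (hW) (wspan_U hV Ux)) (wspan_mul hU hV Uu Vx).
- by move=> y [Vy _]; apply: wspan_V.
move=> _ [_ [y2 [[p [_ [Up [[z [[k [u [Uu ->]]] ->]] ->]]]] [[Vy2 /(xV _ Vy2) Vxy2] ->]]]].
rewrite mulrDl -mulrA mulrDl mulr_algl; apply: subspaceD (hW) (wspan_mul hU hV Up Vy2) _.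
exact: subspaceD (hW) (subspaceZ _ (hW) (wspan_V hU Vxy2)) (wspan_mul hU hV Uu Vxy2).
Qed.

Lemma ltransform U V x : admissible U V -> U x -> V x ->
  [/\ admissible (rpre U (addK U) x) (vsum V (lmul x (addK V))),
      forall y, rpre (addK U) (addK U) x y <-> addK (rpre U (addK U) x) y,
      forall y, vsum (addK V) (lmul x (addK V)) y <-> addK (vsum V (lmul x (addK V))) y &
      forall y, prodspan (rpre U (addK U) x) (vsum V (lmul x (addK V))) y -> prodspan U V y].
Proof.
move=> adm Ux Vx; have [hU hV _] := adm.
have hA := addK_subspace hU; have hB := addK_subspace hV; have hW := wspan_subspace hU hV.
have Ux' u : U u -> addK U (u * x) -> U (u * x).
  by move=> Uu; apply: admissible_addK adm (fun y Uy => wspan_U hV Uy) (wspan_mul hU hV Uu Vx).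
split=> [|y|y|]; [| exact: iff_sym (addK_rpre y hU Ux) | exact: iff_sym (addK_vsum _ _ y) |];
  last first.
- move=> y; apply: kspan_min (kspan_subspace _) _ => w [y1 [y2 [A'y1 [/addK_vsum B'y2 ->]]]].
  move: A'y1 B'y2 => /(addK_rpre y1 hU Ux) [Ay1 Ay1x] [q [p [Bq [[z [Bz ->]] ->]]]].
  rewrite mulrDr mulrA; apply: subspaceD (kspan_subspace _) _ _; apply: kspan_in.
    by exists y1, q.
  by exists (y1 * x), z.
apply: admissible_sub adm (rpre_subspace x hU hA) (vsum_subspace hV (lmul_subspace x hB)) _ _ _.
- by move=> y [Uy _]; apply: wspan_U.
- move=> _ [q [_ [Vq [[z [[k [v [Vv ->]]] ->]] ->]]]].
  rewrite mulrDr mulr_algr; apply: subspaceD (hW) (wspan_V hU Vq) _.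
  exact: subspaceD (hW) (subspaceZ _ (hW) (wspan_V hU Vx)) (wspan_mul hU hV Ux Vv).
move=> _ [y1 [_ [[Uy1 /(Ux' _ Uy1) Uy1x] [[q [_ [Vq [[z [[k [v [Vv ->]]] ->]] ->]]]] ->]]]].
rewrite mulrDr mulrA mulrDr mulr_algr; apply: subspaceD (hW) (wspan_mul hU hV Uy1 Vq) _.
exact: subspaceD (hW) (subspaceZ _ (hW) (wspan_U hV Uy1x)) (wspan_mul hU hV Uy1x Vv).
Qed.
End AdmissiblePairs.

Section LowerBound.
Variables (K : fieldType) (L : unitAlgType K).
Hypothesis divL : forall x : L, x != 0 -> x \is a GRing.unit.
Implicit Types (U V : L -> Prop).

Lemma dim_addK_le V v b : dim_of V v -> dim_of (addK V) b -> (b <= v.+1)%N.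
Proof.
move=> [s [<- [_ eV]]] [t [<- [ft eB]]].
rewrite -add1n -[(1 + _)%N]/(size ([:: 1] ++ s)); apply: steinitz ft _.
move=> j /spanned_nth /eB [k [u [Vu ->]]]; apply: spanned_catD; last exact/eV.
by exists (fun _ => k); rewrite comb1.
Qed.

(* Base case: when U ∩ V = 0, admissibility gives (K ⊕ U) ∩ V = 0, and
   (K ⊕ U) + V lies in the product span; so dim P >= a + dim V >= a + b - 1. *)
Lemma prodspan_disjoint U V a b n : admissible U V -> (forall x, U x -> V x -> x = 0) ->
  dim_of (addK U) a -> dim_of (addK V) b -> dim_of (prodspan U V) n -> (a + b - 1 <= n)%N.
Proof.
move=> adm UV0 dA dB dP; have [hU hV _] := adm.
have [v dV _] := dim_sub_exists hV dP (fun y Vy => addK_prodspanr hU (addK_U Vy)).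
have := dim_addK_le dV dB; suff : (a + v <= n)%N by lia.
case: dA dV dP => [s [<- [fs eA]]] [t [<- [ft eV]]] [w [<- [_ eP]]].
rewrite -size_cat; apply: steinitz.
  apply: indep_cat => // y /eA Ay /eV Vy; apply: UV0 (Vy).
  exact: admissible_addK adm (fun y Uy => wspan_U hV Uy) (wspan_V hU Vy) Ay.
apply: seq_in_cat => i /spanned_nth; [move=> /eA Ay | move=> /eV Vy]; apply/eP.
  exact: addK_prodspanl.
exact: addK_prodspanr (addK_U Vy).
Qed.

(* For a nonzero common element [x], {y in B | x y in B} is a proper subspace of
   B = K ⊕ V: otherwise x B = B would contain 1 = x (k + v) = k x + x v in W. *)
Lemma lpre_proper U V x b i : admissible U V -> U x -> V x -> x != 0 ->
  dim_of (addK V) b -> dim_of (lpre (addK V) (addK V) x) i -> (i < b)%N.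
Proof.
move=> adm Ux Vx x0 dB dI; have [hU hV _] := adm; have hW := wspan_subspace hU hV.
rewrite ltn_neqAle (dim_le dI dB (fun y => @proj1 _ _)) andbT; apply/eqP => ib.
rewrite ib in dI; have BI := dim_eq_sub dI dB (fun y => @proj1 _ _).
have xBB y : lmul x (addK V) y -> addK V y by move=> [z [Bz ->]]; exact: (BI z Bz).2.
have [z [[k [v [Vv ->]]] e1]] := dim_eq_sub (dim_lmul (divL x0) dB) dB xBB (addK_1 hV).
apply: (admissible_one adm); rewrite e1 mulrDr mulr_algr.
exact: subspaceD (hW) (subspaceZ _ (hW) (wspan_V hU Vx)) (wspan_mul hU hV Ux Vv).
Qed.

(* Induction measure: with all dimensions bounded by N, each step increases
   a + b, or keeps it and decreases b. *)
Definition measure (N a b : nat) : nat := ((N + N - (a + b)) * N.+1 + b)%N.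

Lemma measure_lt_b N a b a' b' :
  (a + b <= a' + b')%N -> (b' < b)%N -> (measure N a' b' < measure N a b)%N.
Proof. by rewrite /measure; nia. Qed.

Lemma measure_lt_sum N a b a' b' : (a + b < a' + b' <= N + N)%N -> (b' <= N)%N ->
  (measure N a' b' < measure N a b)%N.
Proof. by rewrite /measure; nia. Qed.

(* If U ∩ V = 0 this is
   [prodspan_disjoint].  Otherwise, for x ≠ 0 in U ∩ V, Grassmann gives dim(A + A x) >= 2a - i1 and
   dim(B + x B) >= 2b - i2 where i1, i2 are the dimensions of
   {y in A | y x in A} and {y in B | x y in B}; the right transform then has
   dimension sum >= a + b when b + i1 <= a + i2 (and i2 < b), the left one
   has dimension sum > a + b otherwise.  Both product spans lie in <A B>. *)
Lemma prodspan_lower N m : forall U V a b n, (measure N a b < m)%N -> (n <= N)%N ->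
  admissible U V -> dim_of (addK U) a -> dim_of (addK V) b -> dim_of (prodspan U V) n ->
  (a + b - 1 <= n)%N.
Proof.
elim: m => // m IH U V a b n lt_m le_nN adm dA dB dP; have [hU hV _] := adm.
case: (classic (exists x, [/\ U x, V x & x != 0])) => [[x [Ux Vx x0]] | none]; last first.
  apply: prodspan_disjoint adm _ dA dB dP => x Ux Vx.
  by apply/eqP/contraT => x0; case: none; exists x.
have le_an : (a <= n)%N := dim_le dA dP (fun y => addK_prodspanl hV).
have [admR eAR eBR subR] := rtransform adm Ux Vx.
have [admL eAL eBL subL] := ltransform adm Ux Vx.
have [[hUR hVR _] [hUL hVL _]] := (admR, admL).
have [a1 da1 _] := dim_sub_exists (addK_subspace hUR) dP
  (fun y Ay => subR y (addK_prodspanl hVR Ay)).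
have [i2 di2 _] := dim_sub_exists (addK_subspace hVR) dP
  (fun y By => subR y (addK_prodspanr hUR By)).
have [i1 di1 _] := dim_sub_exists (addK_subspace hUL) dP
  (fun y Ay => subL y (addK_prodspanl hVL Ay)).
have [b1 db1 le_b1] := dim_sub_exists (addK_subspace hVL) dP
  (fun y By => subL y (addK_prodspanr hUL By)).
have gA := dim_rtranslate (divL x0) dA (dim_ext eAL di1) (dim_ext eAR da1).
have gB := dim_ltranslate (divL x0) dB (dim_ext eBR di2) (dim_ext eBL db1).
have le_i1a : (i1 <= a)%N := dim_le (dim_ext eAL di1) dA (fun y => @proj1 _ _).
case: (leqP (b + i1) (a + i2)) => cmp.
  have lt_i2b := lpre_proper adm Ux Vx x0 dB (dim_ext eBR di2).
  have [n' dn' le_n'] := dim_sub_exists (kspan_subspace _) dP subR.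
  have lt_m' : (measure N a1 i2 < m)%N.
    suff : (measure N a1 i2 < measure N a b)%N by lia.
    by apply: measure_lt_b => //; lia.
  have := IH _ _ a1 i2 n' lt_m' (leq_trans le_n' le_nN) admR da1 di2 dn'; lia.
have [n' dn' le_n'] := dim_sub_exists (kspan_subspace _) dP subL.
have lt_m' : (measure N i1 b1 < m)%N.
  suff : (measure N i1 b1 < measure N a b)%N by lia.
  by apply: measure_lt_sum; lia.
have := IH _ _ i1 b1 n' lt_m' (leq_trans le_n' le_nN) admL di1 db1 dn'; lia.
Qed.
End LowerBound.

Theorem mainTheorem9 (K : fieldType) (L : unitAlgType K)
  (divL : forall x : L, x != 0 -> x \is a GRing.unit)
  (A B Abar Bbar : L -> Prop) (a b : nat)
  (subA : is_subspace A) (subB : is_subspace B)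
  (dimA : has_dim A a) (dimB : has_dim B b)
  (KA : forall k : K, A (k%:A)) (KB : forall k : K, B (k%:A))
  (subAbar : is_subspace Abar) (subBbar : is_subspace Bbar)
  (decA : dsum_K A Abar) (decB : dsum_K B Bbar)
  (hK : forall k : K,
      sum3 Abar Bbar (kspan (prodset Abar Bbar)) (k%:A) -> k%:A = 0 :> L) :
  exists n : nat, has_dim (kspan (prodset A B)) n /\ (a + b - 1 <= n)%N.
Proof.
have eA y : A y <-> addK Abar y := proj1 decA y.
have eB y : B y <-> addK Bbar y := proj1 decB y.
have dA : dim_of (addK Abar) a := dim_ext (fun y => iff_sym (eA y)) ((dim_ofE _ _).1 dimA).
have dB : dim_of (addK Bbar) b := dim_ext (fun y => iff_sym (eB y)) ((dim_ofE _ _).1 dimB).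
have eP v : kspan (prodset A B) v <-> prodspan Abar Bbar v.
  by split; apply: kspan_mono => _ [y [z [/eA Ay [/eB Bz ->]]]]; exists y, z.
have [n dP] := dim_prodset dA dB.
exists n; split; first exact/dim_ofE/(dim_ext eP dP).
exact: (prodspan_lower divL (ltnSn _) (leqnn n) (Admissible subAbar subBbar hK) dA dB dP).
Qed.
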